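(* Let $n,d\ge 1$. Let $W=(w_{i,j})$ and $\widetilde W=(\tilde w_{i,j})$ be real $n\times n$ matrices and let $G,\widetilde G$ be real $nd\times nd$ block matrices with $d\times d$ blocks $G_{i,j},\widetilde G_{i,j}$. Suppose that for some $\varepsilon,\eta\ge 0$, $$\sup_{i,j}|\tilde w_{i,j}-w_{i,j}|\le \varepsilon,\qquad \sup_{i,j}\|\widetilde G_{i,j}-G_{i,j}\|_F\le \eta,$$ and that there is $C>0$ with $0\le w_{i,j}\le C$ for all $i,j$, $\sup_{i,j}\|G_{i,j}\|_F\le C$ and $\sup_{i,j}\|\widetilde G_{i,j}\|_F\le C$. If $\inf_i \frac1n\sum_{j\neq i}w_{i,j}>\gamma$ and $\gamma>\varepsilon$, then $$\|L(W,G)-L(\widetilde W,\widetilde G)\|_{op}\le \frac{1}{\gamma}C(\eta+\varepsilon)+\frac{\varepsilon}{\gamma(\gamma-\varepsilon)}C^2 .$$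
   Context: For an $n\times n$ matrix $W=(w_{i,j})$ and an $nd\times nd$ block matrix $G$ with $d\times d$ blocks $G_{i,j}$, define $S$ as the $nd\times nd$ block matrix with blocks $S_{i,j}=w_{i,j}G_{i,j}$, and $D$ as the $nd\times nd$ block-diagonal matrix with diagonal blocks $D_{i,i}=\big(\sum_{j\neq i}w_{i,j}\big)\mathrm{I}_d$ (assumed invertible). Then $L(W,G):=D^{-1}S$. $\|\cdot\|_{op}$ is the largest singular value and $\|\cdot\|_F$ the Frobenius norm. *)

From HB Require Import structures.
From mathcomp Require Import all_boot all_order all_algebra.
From mathcomp Require Import all_classical all_reals.
From mathcomp Require Import zify.
Set Implicit Arguments. Unset Strict Implicit. Unset Printing Implicit Defensive.
Import Order.TTheory GRing.Theory Num.Theory.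
Local Open Scope classical_set_scope.
Local Open Scope ring_scope.

(* Block indexing of 'I_(n*d): global index a = i*d + k with block i, offset k. *)
Lemma bidx_lt (n d : nat) (i : 'I_n) (k : 'I_d) : (i * d + k < n * d)%N.
Proof.
have hi := ltn_ord i; have hk := ltn_ord k.
have : (i.+1 * d <= n * d)%N by rewrite leq_mul2r hi orbT.
rewrite mulSn; lia.
Qed.

Definition bidx (n d : nat) (i : 'I_n) (k : 'I_d) : 'I_(n * d) :=
  Ordinal (bidx_lt i k).

Lemma blk_lt (n d : nat) (a : 'I_(n * d)) : (a %/ d < n)%N.
Proof.
have ha : (nat_of_ord a < n * d)%N := ltn_ord a.
move: (nat_of_ord a) ha => x ha.
have hd : (0 < d)%N by case: (posnP d) ha => [->|//]; rewrite muln0.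
by rewrite ltn_divLR.
Qed.

Definition blk (n d : nat) (a : 'I_(n * d)) : 'I_n := Ordinal (blk_lt a).

Section Defs.
Variable R : realType.

Definition block (n d : nat) (G : 'M[R]_(n * d)) (i j : 'I_n) : 'M[R]_d :=
  \matrix_(k, l) G (bidx i k) (bidx j l).

Definition frob (m p : nat) (A : 'M[R]_(m, p)) : R :=
  Num.sqrt (\sum_i \sum_j A i j ^+ 2).

Definition vnorm (m : nat) (x : 'cV[R]_m) : R :=
  Num.sqrt (\sum_i x i 0 ^+ 2).

Definition opnorm (m p : nat) (A : 'M[R]_(m, p)) : R :=
  sup [set vnorm (A *m x) | x in [set x : 'cV[R]_p | vnorm x = 1]].

(* S(W,G): blocks S_{i,j} = w_{i,j} G_{i,j} *)
Definition Smat (n d : nat) (W : 'M[R]_n) (G : 'M[R]_(n * d)) : 'M[R]_(n * d) :=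
  \matrix_(a, b) (W (blk a) (blk b) * G a b).

Definition degw (n : nat) (W : 'M[R]_n) (i : 'I_n) : R :=
  \sum_(j < n | j != i) W i j.

(* D(W): block diagonal with D_{i,i} = (sum_{j<>i} w_{i,j}) I_d *)
Definition Dmat (n d : nat) (W : 'M[R]_n) : 'M[R]_(n * d) :=
  diag_mx (\row_a degw W (blk a)).

Definition Lmat (n d : nat) (W : 'M[R]_n) (G : 'M[R]_(n * d)) : 'M[R]_(n * d) :=
  invmx (Dmat d W) *m Smat W G.

End Defs.

From HB Require Import structures.
From mathcomp Require Import all_boot all_order all_algebra.
From mathcomp Require Import all_classical all_reals.
From mathcomp Require Import ring lra.
Import Order.TTheory GRing.Theory Num.Theory.
Local Open Scope ring_scope.
Set Implicit Arguments. Unset Strict Implicit.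

(* Bound the operator norm by the Frobenius norm and cut the latter into its
   d x d blocks.  With p_ij = w_ij / deg_i and q_ij the same ratio for the
   perturbed weights, block (i,j) of the difference is
   (p_ij - q_ij) G~_ij - p_ij (G~_ij - G_ij), of Frobenius norm at most
   eta p_ij + C |p_ij - q_ij|.  As deg_i > n gamma, a row of p has Euclidean
   norm at most C / (gamma sqrt n), and a row of p - q at most T / sqrt n with
   T = eps / gamma + eps C / (gamma (gamma - eps)).  For the latter write
   p_j - q_j = (w_j D - deg_i (w~_j - w_j)) / (deg_i deg~_i) with
   D = deg~_i - deg_i, |D| <= (n - 1) eps; expanding the square, summing over j
   and using w_j^2 <= C w_j leaves two polynomial inequalities. *)

Section L2norm.
Variables (R : realType) (T : finType).
Implicit Types (f g : T -> R).

Definition l2norm f := Num.sqrt (\sum_t f t ^+ 2).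

Lemma l2norm_ge0 f : 0 <= l2norm f.
Proof. exact: sqrtr_ge0. Qed.

Lemma sqr_l2norm f : l2norm f ^+ 2 = \sum_t f t ^+ 2.
Proof. by rewrite sqr_sqrtr // sumr_ge0 // => t _; exact: sqr_ge0. Qed.

Lemma l2norm_le f c : 0 <= c -> \sum_t f t ^+ 2 <= c ^+ 2 -> l2norm f <= c.
Proof. by move=> c_ge0 hf; rewrite -(ger0_norm c_ge0) -sqrtr_sqr ler_wsqrtr. Qed.

Lemma sqr_sqrtr_mul_l2norm a f :
  0 <= a -> (Num.sqrt a * l2norm f) ^+ 2 = a * \sum_t f t ^+ 2.
Proof. by move=> a_ge0; rewrite exprMn sqr_sqrtr // sqr_l2norm. Qed.

Lemma sqr_sum_mul_le f g :
  (\sum_t f t * g t) ^+ 2 <= (\sum_t f t ^+ 2) * (\sum_t g t ^+ 2).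
Proof.
have sq_ff_gg : \sum_s \sum_t f s ^+ 2 * g t ^+ 2 = (\sum_t f t ^+ 2) * (\sum_t g t ^+ 2).
  by rewrite mulr_suml; apply: eq_bigr => s _; rewrite mulr_sumr.
have sq_fg : \sum_s \sum_t (f s * g s) * (f t * g t) = (\sum_t f t * g t) ^+ 2.
  by rewrite expr2 mulr_suml; apply: eq_bigr => s _; rewrite mulr_sumr.
have lagrange : \sum_s \sum_t (f s * g t - f t * g s) ^+ 2 =
    \sum_s \sum_t f s ^+ 2 * g t ^+ 2 + \sum_s \sum_t f t ^+ 2 * g s ^+ 2
    - 2%:R * \sum_s \sum_t (f s * g s) * (f t * g t).
  rewrite -big_split /= mulr_sumr -sumrB; apply: eq_bigr => s _.
  rewrite -big_split /= mulr_sumr -sumrB; apply: eq_bigr => t _; ring.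
have : 0 <= \sum_s \sum_t (f s * g t - f t * g s) ^+ 2.
  by apply: sumr_ge0 => s _; apply: sumr_ge0 => t _; exact: sqr_ge0.
rewrite lagrange [\sum_s \sum_t f t ^+ 2 * _]exchange_big /= sq_ff_gg sq_fg; lra.
Qed.

Lemma sum_mul_le_l2norm f g : \sum_t f t * g t <= l2norm f * l2norm g.
Proof.
rewrite -[_ * _]ger0_norm ?mulr_ge0 ?l2norm_ge0 // -sqrtr_sqr.
apply: le_trans (ler_norm _) _; rewrite -sqrtr_sqr ler_wsqrtr //.
by rewrite exprMn !sqr_l2norm sqr_sum_mul_le.
Qed.

Lemma l2normD_le f g : l2norm (fun t => f t + g t) <= l2norm f + l2norm g.
Proof.
apply: l2norm_le; first by rewrite addr_ge0 ?l2norm_ge0.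
have -> : \sum_t (f t + g t) ^+ 2 =
    \sum_t f t ^+ 2 + 2%:R * \sum_t f t * g t + \sum_t g t ^+ 2.
  by rewrite mulr_sumr -!big_split /=; apply: eq_bigr => t _; ring.
rewrite -!sqr_l2norm; have := sum_mul_le_l2norm f g; nra.
Qed.

Lemma l2normZ c f : l2norm (fun t => c * f t) = `|c| * l2norm f.
Proof.
rewrite /l2norm -sqrtr_sqr -sqrtrM ?sqr_ge0 // mulr_sumr.
by congr Num.sqrt; apply: eq_bigr => t _; rewrite exprMn.
Qed.

Lemma l2norm_abs f : l2norm (fun t => `|f t|) = l2norm f.
Proof.
by congr Num.sqrt; apply: eq_bigr => t _; rewrite real_normK ?num_real.
Qed.

Lemma sqrtr_mul_l2norm_le a c f :
  0 <= a -> 0 <= c -> a * \sum_t f t ^+ 2 <= c ^+ 2 -> Num.sqrt a * l2norm f <= c.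
Proof.
move=> a_ge0 c_ge0; rewrite -sqr_sqrtr_mul_l2norm // ler_sqr ?nnegrE //.
by rewrite mulr_ge0 ?sqrtr_ge0 ?l2norm_ge0.
Qed.

End L2norm.

Section Frobenius.
Variables (R : realType) (m p : nat).
Implicit Types (A B : 'M[R]_(m, p)).

Lemma frob_l2norm A : frob A = l2norm (fun ij : 'I_m * 'I_p => A ij.1 ij.2).
Proof. by rewrite /frob /l2norm pair_bigA. Qed.

Lemma frob_ge0 A : 0 <= frob A.
Proof. exact: sqrtr_ge0. Qed.

Lemma sqr_frob A : frob A ^+ 2 = \sum_i \sum_j A i j ^+ 2.
Proof. by rewrite frob_l2norm sqr_l2norm pair_bigA. Qed.

Lemma frobD_le A B : frob (A + B) <= frob A + frob B.
Proof.
rewrite !frob_l2norm.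
have -> : (fun ij : 'I_m * 'I_p => (A + B) ij.1 ij.2) = (fun ij => A ij.1 ij.2 + B ij.1 ij.2).
  by apply: funext => ij; rewrite mxE.
exact: l2normD_le.
Qed.

Lemma frobZ a A : frob (a *: A) = `|a| * frob A.
Proof.
rewrite !frob_l2norm -l2normZ; congr l2norm.
by apply: funext => ij; rewrite mxE.
Qed.

Lemma frobB_le A B : frob (A - B) <= frob A + frob B.
Proof. by rewrite -scaleN1r; apply: le_trans (frobD_le _ _) _; rewrite frobZ normrN1 mul1r. Qed.

Lemma frob_scale_diff_le a b A B :
  frob (a *: A - b *: B) <= `|a| * frob (B - A) + `|a - b| * frob B.
Proof.
have -> : a *: A - b *: B = (a - b) *: B - a *: (B - A).
  by rewrite scalerBr scalerBl opprB [RHS]addrC addrA subrK.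
by apply: le_trans (frobB_le _ _) _; rewrite !frobZ addrC.
Qed.

Lemma vnorm_mulmx_le A (x : 'cV[R]_p) : vnorm (A *m x) <= frob A * vnorm x.
Proof.
rewrite /vnorm -sqrtrM; last by rewrite -sqr_frob sqr_ge0.
apply: ler_wsqrtr; rewrite mulr_suml; apply: ler_sum => i _; rewrite mxE.
exact: (sqr_sum_mul_le (fun j => A i j) (fun j => x j 0)).
Qed.

Lemma opnorm_le_frob A : (0 < p)%N -> opnorm A <= frob A.
Proof.
move=> p_gt0; apply: ge_sup.
  pose x0 : 'cV[R]_p := \col_j (j == Ordinal p_gt0)%:R.
  exists (vnorm (A *m x0)), x0 => //=.
  rewrite /vnorm (bigD1 (Ordinal p_gt0)) //= big1 ?addr0 => [|j /negbTE j_neq].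
    by rewrite !mxE eqxx expr1n sqrtr1.
  by rewrite !mxE j_neq expr0n.
move=> _ [x /= x_unit <-]; apply: le_trans (vnorm_mulmx_le _ _) _.
by rewrite x_unit mulr1.
Qed.

End Frobenius.

Section BlockIndex.
Variables (n d : nat) (d_gt0 : (0 < d)%N).

Definition boff (a : 'I_(n * d)) : 'I_d := Ordinal (ltn_pmod a d_gt0).

Lemma blk_bidx (i : 'I_n) (k : 'I_d) : blk (bidx i k) = i.
Proof. by apply: val_inj; rewrite /= divnMDl // divn_small ?addn0. Qed.

Lemma boff_bidx (i : 'I_n) (k : 'I_d) : boff (bidx i k) = k.
Proof. by apply: val_inj; rewrite /= modnMDl modn_small. Qed.

Lemma bidx_blk (a : 'I_(n * d)) : bidx (blk a) (boff a) = a.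
Proof. by apply: val_inj; rewrite /= -divn_eq. Qed.

Lemma big_blocks (V : nmodType) (F : 'I_(n * d) -> V) :
  \sum_a F a = \sum_i \sum_k F (bidx i k).
Proof.
rewrite pair_bigA (reindex (fun ik : 'I_n * 'I_d => bidx ik.1 ik.2)) //=.
exists (fun a => (blk a, boff a)) => [[i k] _ | a _] /=.
  by rewrite blk_bidx boff_bidx.
by rewrite bidx_blk.
Qed.

Lemma sqr_frob_blocks (R : realType) (A : 'M[R]_(n * d)) :
  frob A ^+ 2 = \sum_i \sum_j frob (block A i j) ^+ 2.
Proof.
rewrite sqr_frob big_blocks; apply: eq_bigr => i _.
under eq_bigr do rewrite big_blocks.
rewrite exchange_big; apply: eq_bigr => j _; rewrite sqr_frob.
by apply: eq_bigr => k _; apply: eq_bigr => l _; rewrite mxE.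
Qed.

Lemma frob_le_block_rows (R : realType) (A : 'M[R]_(n * d)) (K : R) :
  (0 < n)%N -> 0 <= K ->
  (forall i, n%:R * \sum_j frob (block A i j) ^+ 2 <= K ^+ 2) -> frob A <= K.
Proof.
move=> n_gt0 K_ge0 row_le.
rewrite -ler_sqr ?nnegrE ?frob_ge0 // sqr_frob_blocks.
have -> : K ^+ 2 = \sum_(i < n) K ^+ 2 / n%:R.
  by rewrite sumr_const card_ord -[(_ / _) *+ n]mulr_natr divfK // pnatr_eq0 -lt0n.
by apply: ler_sum => i _; rewrite ler_pdivlMr ?ltr0n // mulrC.
Qed.

End BlockIndex.

Lemma blockB (R : realType) (n d : nat) (A B : 'M[R]_(n * d)) (i j : 'I_n) :
  block (A - B) i j = block A i j - block B i j.
Proof. by apply/matrixP => k l; rewrite !mxE. Qed.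

Lemma block_Lmat (R : realType) (n d : nat) (W : 'M[R]_n) (G : 'M[R]_(n * d))
    (d_gt0 : (0 < d)%N) (i j : 'I_n) :
  (forall i, degw W i != 0) ->
  block (Lmat W G) i j = (W i j / degw W i) *: block G i j.
Proof.
move=> deg_neq0.
pose Dinv : 'M[R]_(n * d) := diag_mx (\row_a (degw W (blk a))^-1).
have DinvD : Dinv *m Dmat d W = 1%:M.
  apply/matrixP => a b; rewrite mul_diag_mx !mxE.
  by case: (eqVneq a b) => [->|_]; rewrite ?mulr1n ?mulVf ?mulr0n ?mulr0.
have invD : invmx (Dmat d W) = Dinv.
  have [_ D_unit] := mulmx1_unit DinvD.
  by rewrite -[invmx _]mul1mx -DinvD -mulmxA mulmxV // mulmx1.
apply/matrixP => k l.
by rewrite /Lmat invD mxE mul_diag_mx !mxE !blk_bidx // mulrCA mulrA.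
Qed.

Lemma sumr_const_neq (R : ringType) (n : nat) (i : 'I_n) (c : R) :
  \sum_(j < n | j != i) c = (n%:R - 1) * c.
Proof.
rewrite sumr_const cardC1 card_ord -subn1 -[c *+ _]mulr_natl.
by rewrite natrB // (leq_ltn_trans _ (ltn_ord i)).
Qed.

Lemma weight_defect_poly_le (R : realFieldType) (N d b C eps : R) :
  1 <= N -> 0 <= eps -> 0 <= b <= (N - 1) * eps -> 0 <= d <= N * C -> 0 < C ->
  N * (N * eps * (eps * d ^+ 2 + 2%:R * b * C * d) + b ^+ 2 * C * (C - d)
       - 2%:R * b * eps * d ^+ 2)
  <= (d * (N * eps - b) + N ^+ 2 * C * eps) ^+ 2.
Proof.
move=> N_ge1 eps_ge0 /andP[b_ge0 b_le] /andP[d_ge0 d_le] C_gt0.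
set P := 2%:R * N ^+ 2 * eps ^+ 2 - 4%:R * N * eps * b + b ^+ 2.
set Q := N ^+ 3 * eps ^+ 2 - b ^+ 2.
have Q_ge0 : 0 <= Q.
  have b_le_Neps : b <= N * eps by nra.
  have : N ^+ 2 * eps ^+ 2 <= N ^+ 3 * eps ^+ 2.
    rewrite [N ^+ 3]exprS -mulrA; apply: ler_peMl => //; exact: mulr_ge0 (sqr_ge0 _) (sqr_ge0 _).
  rewrite /Q -exprMn; nra.
(* Expand around the endpoint [b = (N - 1) eps]. *)
have NPQ_ge0 : 0 <= N * P + Q.
  have -> : N * P + Q =
      ((N - 1) * eps - b) * (4%:R * N ^+ 2 * eps - (N - 1) * (b + (N - 1) * eps))
      + eps ^+ 2 * (N ^+ 2 + 3%:R * N - 1) by rewrite /P /Q; ring.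
  apply: addr_ge0; last by apply: mulr_ge0; [exact: sqr_ge0 | nra].
  apply: mulr_ge0; first lra.
  have : (N - 1) * (b + (N - 1) * eps) <= (N - 1) * (2%:R * (N - 1) * eps) by nra.
  nra.
(* [d P + C Q] is affine in [d] and nonnegative at [d = 0] and [d = N C]. *)
have dPCQ_ge0 : 0 <= d * P + C * Q.
  have NC_gt0 : 0 < N * C by nra.
  rewrite -(pmulr_rge0 _ NC_gt0).
  have -> : N * C * (d * P + C * Q) = d * C * (N * P + Q) + (N * C - d) * C * Q by ring.
  by rewrite addr_ge0 // !mulr_ge0 // ?subr_ge0 // ltW.
rewrite -subr_ge0.
have -> : (d * (N * eps - b) + N ^+ 2 * C * eps) ^+ 2 -
    N * (N * eps * (eps * d ^+ 2 + 2%:R * b * C * d) + b ^+ 2 * C * (C - d)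
         - 2%:R * b * eps * d ^+ 2) = (d * b) ^+ 2 + N * C * (d * P + C * Q).
  by rewrite /P /Q; ring.
by rewrite addr_ge0 ?sqr_ge0 // !mulr_ge0 // ?ltW //; lra.
Qed.

Lemma weight_defect_root_le (R : realFieldType) (N d dt b C eps gamma : R) :
  1 <= N -> 0 <= eps -> eps < gamma -> 0 <= C -> N * gamma < d ->
  0 <= b <= (N - 1) * eps -> d - b <= dt ->
  d * (N * eps - b) + N ^+ 2 * C * eps
    <= (eps / gamma + eps * C / (gamma * (gamma - eps))) * (d * dt).
Proof.
move=> N_ge1 eps_ge0 eps_lt C_ge0 d_gt /andP[b_ge0 b_le] dt_ge.
have gamma_gt0 : 0 < gamma by lra.
have gap_gt0 : 0 < gamma - eps by lra.
have d_gt0 : 0 < d by nra.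
have dt_lb : N * (gamma - eps) <= dt by nra.
rewrite mulrDl; apply: lerD.
  rewrite mulrAC mulrC ler_pdivlMr //.
  have key : (N * eps - b) * gamma <= eps * dt by nra.
  by have := ler_wpM2l (ltW d_gt0) key; lra.
rewrite [X in _ <= X]mulrAC ler_pdivlMr ?mulr_gt0 //.
have : N ^+ 2 * (gamma * (gamma - eps)) <= d * dt.
  by rewrite expr2 -mulrACA ler_pM //; nra.
have : 0 <= C * eps by exact: mulr_ge0.
nra.
Qed.

Section NormalizedWeights.
Variables (R : realType) (n : nat) (i : 'I_n) (w wt : 'I_n -> R) (eps C gamma : R).
Hypotheses (eps_ge0 : 0 <= eps) (eps_lt_gamma : eps < gamma).
Hypotheses (w_bound : forall j, 0 <= w j <= C) (wt_near : forall j, `|wt j - w j| <= eps).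
Hypothesis deg_gt : gamma < n%:R^-1 * \sum_(j < n | j != i) w j.

Local Notation N := (n%:R : R).
Local Notation deg f := (\sum_(j < n | j != i) f j).
Local Notation D := (deg wt - deg w).

Lemma nat_ge1 : 1 <= N.
Proof. by rewrite ler1n; apply: leq_ltn_trans (ltn_ord i). Qed.

Lemma mul_gamma_lt_deg : N * gamma < deg w.
Proof. by rewrite -ltr_pdivlMl // (lt_le_trans ltr01 nat_ge1). Qed.

Lemma deg_le : deg w <= (N - 1) * C.
Proof. by rewrite -(sumr_const_neq i); apply: ler_sum => j _; case/andP: (w_bound j). Qed.

Lemma deg_diff_le : `|deg wt - deg w| <= (N - 1) * eps.
Proof.
rewrite -sumrB -(sumr_const_neq i); apply: le_trans (ler_norm_sum _ _ _) _.
exact: ler_sum.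
Qed.

Lemma gamma_gt0 : 0 < gamma. Proof. exact: le_lt_trans eps_ge0 eps_lt_gamma. Qed.

Lemma deg_gt0 : 0 < deg w.
Proof.
apply: lt_trans mul_gamma_lt_deg.
by rewrite mulr_gt0 ?gamma_gt0 // (lt_le_trans ltr01 nat_ge1).
Qed.

Lemma C_gt0 : 0 < C.
Proof.
rewrite ltNge; apply/negP => C_le0.
have := lt_le_trans deg_gt0 deg_le; rewrite ltNge mulr_ge0_le0 //.
by rewrite subr_ge0 nat_ge1.
Qed.

Lemma mul_gap_lt_deg_wt : N * (gamma - eps) < deg wt.
Proof.
have := deg_diff_le; have := mul_gamma_lt_deg.
have : deg w - deg wt <= `|deg wt - deg w| by rewrite distrC ler_norm.
have : (N - 1) * eps <= N * eps by rewrite ler_wpM2r // lerBlDr lerDl.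
lra.
Qed.

Lemma deg_wt_gt0 : 0 < deg wt.
Proof.
apply: le_lt_trans mul_gap_lt_deg_wt.
by apply: mulr_ge0; [exact: le_trans ler01 nat_ge1 | rewrite subr_ge0 ltW].
Qed.

Lemma sum_sqr_weights_le : N * \sum_j (w j / deg w) ^+ 2 <= (C / gamma) ^+ 2.
Proof.
have d_gt0 := deg_gt0; have C_ge0 := ltW C_gt0.
have term_le j : (w j / deg w) ^+ 2 <= (C / deg w) ^+ 2.
  have [w_ge0 w_le] := andP (w_bound j).
  by rewrite ler_sqr ?nnegrE ?divr_ge0 ?ler_pM2r ?invr_gt0 ?(ltW d_gt0).
apply: le_trans (ler_wpM2l (ler0n _ _) (ler_sum _ (fun j _ => term_le j))) _.
rewrite sumr_const card_ord -[(_ / _) ^+ 2 *+ n]mulr_natl mulrA -expr2 -exprMn.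
rewrite ler_sqr ?nnegrE ?mulr_ge0 ?divr_ge0 ?invr_ge0 ?ler0n ?(ltW d_gt0) ?(ltW gamma_gt0) //.
rewrite mulrA ler_pdivrMr // mulrAC ler_pdivlMr ?gamma_gt0 //.
by rewrite mulrAC [X in _ <= X]mulrC (ler_pM2r C_gt0) ltW // mul_gamma_lt_deg.
Qed.

Lemma sum_sqr_weight_defect_le :
  \sum_j (w j * D - deg w * (wt j - w j)) ^+ 2 <=
  N * eps * (eps * deg w ^+ 2 + 2%:R * `|D| * C * deg w)
  + `|D| ^+ 2 * C * (C - deg w) - 2%:R * `|D| * eps * deg w ^+ 2.
Proof.
set d := deg w; set D := deg wt - d; set b := `|D|.
have d_ge0 : 0 <= d := ltW deg_gt0.
have b_ge0 : 0 <= b := normr_ge0 D.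
have D_sqr : D ^+ 2 = b ^+ 2 by rewrite real_normK ?num_real.
have diag_le : (w i * D - d * (wt i - w i)) ^+ 2 <= (b * C + d * eps) ^+ 2.
  have [w_ge0 w_le] := andP (w_bound i).
  have : `|w i * D - d * (wt i - w i)| <= b * C + d * eps.
    apply: le_trans (ler_normB _ _) _; rewrite !normrM (ger0_norm w_ge0) (ger0_norm d_ge0).
    by rewrite mulrC lerD // ?ler_wpM2l // ler_wpM2r.
  rewrite -[_ ^+ 2]real_normK ?num_real // ler_sqr ?nnegrE //.
  by rewrite addr_ge0 ?mulr_ge0 // ltW ?C_gt0.
(* Off the diagonal we use [w_j^2 <= C w_j] and [w_j (b eps - D x) <= C (b eps - D x)]. *)
have off_le j : j != i -> (w j * D - d * (wt j - w j)) ^+ 2 <=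
    (C * b ^+ 2 - 2%:R * d * b * eps) * w j - 2%:R * d * C * D * (wt j - w j)
    + (2%:R * d * C * b * eps + d ^+ 2 * eps ^+ 2).
  move=> _; have [w_ge0 w_le] := andP (w_bound j).
  set x := wt j - w j.
  have x_sqr : x ^+ 2 <= eps ^+ 2.
    by rewrite -[x ^+ 2]real_normK ?num_real // ler_sqr ?nnegrE ?normr_ge0 ?wt_near.
  have Dx_le : D * x <= b * eps.
    by apply: le_trans (ler_norm _) _; rewrite normrM; apply: ler_wpM2l; rewrite ?normr_ge0 ?wt_near.
  have ww : w j ^+ 2 <= C * w j by rewrite expr2; apply: ler_wpM2r.
  have cross : w j * (b * eps - D * x) <= C * (b * eps - D * x).
    by apply: ler_wpM2r; rewrite // subr_ge0.
  have : d ^+ 2 * x ^+ 2 <= d ^+ 2 * eps ^+ 2 by apply: ler_wpM2l; rewrite ?sqr_ge0.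
  have : w j ^+ 2 * b ^+ 2 <= C * w j * b ^+ 2 by apply: ler_wpM2r; rewrite ?sqr_ge0.
  have : d * (w j * (b * eps - D * x)) <= d * (C * (b * eps - D * x)) by apply: ler_wpM2l.
  have -> : (w j * D - d * x) ^+ 2 = w j ^+ 2 * D ^+ 2 - 2%:R * d * (w j * D * x) + d ^+ 2 * x ^+ 2.
    by ring.
  rewrite D_sqr; lra.
rewrite (bigD1 i) //=; apply: le_trans (lerD diag_le (ler_sum _ off_le)) _.
rewrite !big_split /= sumrN !(sumr_const_neq i) -!mulr_sumr sumrB -/D -/d.
rewrite -[_ * D * D]mulrA -expr2 D_sqr; lra.
Qed.

Lemma sum_sqr_weights_diff_le :
  N * \sum_j (w j / deg w - wt j / deg wt) ^+ 2
    <= (eps / gamma + eps * C / (gamma * (gamma - eps))) ^+ 2.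
Proof.
have d_gt0 := deg_gt0; have dt_gt0 := deg_wt_gt0; have N_ge1 := nat_ge1.
have b_le : 0 <= `|D| <= (N - 1) * eps by rewrite normr_ge0 deg_diff_le.
have dt_ge : deg w - `|D| <= deg wt.
  by have := ler_norm (deg w - deg wt); rewrite distrC; lra.
have diffE j : w j / deg w - wt j / deg wt =
    (w j * D - deg w * (wt j - w j)) / (deg w * deg wt).
  by field; rewrite !gt_eqF.
under eq_bigr do rewrite diffE expr_div_n.
rewrite -mulr_suml mulrA ler_pdivrMr ?exprn_gt0 ?mulr_gt0 //.
apply: le_trans (ler_wpM2l (ler0n _ _) sum_sqr_weight_defect_le) _.
apply: le_trans (weight_defect_poly_le N_ge1 eps_ge0 b_le _ C_gt0) _.
  by rewrite (ltW d_gt0) (le_trans deg_le) // ler_wpM2r ?(ltW C_gt0) // gerBl.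
have X_le := weight_defect_root_le N_ge1 eps_ge0 eps_lt_gamma (ltW C_gt0)
  mul_gamma_lt_deg b_le dt_ge.
have X_ge0 : 0 <= deg w * (N * eps - `|D|) + N ^+ 2 * C * eps.
  case/andP: b_le => _ b_le.
  have : (N - 1) * eps <= N * eps by rewrite ler_wpM2r // gerBl.
  by move=> ?; rewrite addr_ge0 ?mulr_ge0 ?subr_ge0 ?sqr_ge0 ?(ltW d_gt0) ?(ltW C_gt0) //; lra.
by rewrite -exprMn ler_sqr ?nnegrE // (le_trans X_ge0 X_le).
Qed.

End NormalizedWeights.

Section LmatRowBound.
Variables (R : realType) (n d : nat) (W Wt : 'M[R]_n) (G Gt : 'M[R]_(n * d)).
Variables (eps eta C gamma : R) (i : 'I_n).
Hypotheses (d_gt0 : (0 < d)%N) (eps_ge0 : 0 <= eps) (eps_lt_gamma : eps < gamma).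
Hypotheses (degW_neq0 : forall k, degw W k != 0) (degWt_neq0 : forall k, degw Wt k != 0).
Hypotheses (W_bound : forall j, 0 <= W i j <= C) (Wt_near : forall j, `|Wt i j - W i j| <= eps).
Hypothesis deg_gt : gamma < n%:R^-1 * degw W i.
Hypotheses (eta_ge0 : 0 <= eta) (Gt_near : forall j, frob (block Gt i j - block G i j) <= eta).
Hypothesis Gt_bound : forall j, frob (block Gt i j) <= C.

Local Notation p j := (W i j / degw W i).
Local Notation q j := (Wt i j / degw Wt i).
Local Notation M := (Lmat W G - Lmat Wt Gt).

Lemma frob_block_Lmat_diff_le j : frob (block M i j) <= eta * p j + C * `|p j - q j|.
Proof.
have p_ge0 : 0 <= p j.
  rewrite divr_ge0 ?(ltW (deg_gt0 eps_ge0 eps_lt_gamma deg_gt)) //.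
  by case/andP: (W_bound j).
rewrite blockB !block_Lmat //; apply: le_trans (frob_scale_diff_le _ _ _ _) _.
rewrite (ger0_norm p_ge0) [eta * _]mulrC [C * _]mulrC.
by apply: lerD; apply: ler_wpM2l; rewrite ?normr_ge0.
Qed.

Lemma sum_sqr_frob_block_Lmat_diff_le :
  n%:R * \sum_j frob (block M i j) ^+ 2 <=
  (gamma^-1 * C * (eta + eps) + eps / (gamma * (gamma - eps)) * C ^+ 2) ^+ 2.
Proof.
have gamma_gt0 := gamma_gt0 eps_ge0 eps_lt_gamma.
have C_gt0 := C_gt0 eps_ge0 eps_lt_gamma W_bound deg_gt.
set T := eps / gamma + eps * C / (gamma * (gamma - eps)).
have -> : gamma^-1 * C * (eta + eps) + eps / (gamma * (gamma - eps)) * C ^+ 2 =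
    eta * (C / gamma) + C * T.
  by rewrite /T; field; rewrite !gt_eqF ?subr_gt0.
have T_ge0 : 0 <= T.
  by rewrite addr_ge0 ?divr_ge0 ?mulr_ge0 ?subr_ge0 ?(ltW eps_lt_gamma) ?(ltW C_gt0) ?(ltW gamma_gt0).
have Cg_ge0 : 0 <= C / gamma by rewrite divr_ge0 ?ltW.
pose u j := eta * p j + C * `|p j - q j|.
have u_le : Num.sqrt n%:R * l2norm u <= eta * (C / gamma) + C * T.
  have p_le : Num.sqrt n%:R * l2norm (fun j => p j) <= C / gamma.
    exact: sqrtr_mul_l2norm_le (ler0n _ _) Cg_ge0
      (sum_sqr_weights_le eps_ge0 eps_lt_gamma W_bound deg_gt).
  have pq_le : Num.sqrt n%:R * l2norm (fun j => p j - q j) <= T.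
    exact: sqrtr_mul_l2norm_le (ler0n _ _) T_ge0
      (sum_sqr_weights_diff_le eps_ge0 eps_lt_gamma W_bound Wt_near deg_gt).
  apply: le_trans (ler_wpM2l (sqrtr_ge0 _) (l2normD_le _ _)) _.
  rewrite !l2normZ l2norm_abs (ger0_norm eta_ge0) (gtr0_norm C_gt0) mulrDr.
  rewrite [Num.sqrt _ * (eta * _)]mulrCA [Num.sqrt _ * (C * _)]mulrCA.
  by apply: lerD; apply: ler_wpM2l; rewrite ?(ltW C_gt0).
have sqr_block_le j : frob (block M i j) ^+ 2 <= u j ^+ 2.
  have block_le : frob (block M i j) <= u j := frob_block_Lmat_diff_le j.
  by rewrite ler_sqr // nnegrE ?frob_ge0 // (le_trans (frob_ge0 _) block_le).
apply: le_trans (ler_wpM2l (ler0n _ _) (ler_sum _ (fun j _ => sqr_block_le j))) _.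
have lhs_ge0 : 0 <= Num.sqrt n%:R * l2norm u by rewrite mulr_ge0 ?sqrtr_ge0 ?l2norm_ge0.
by rewrite -sqr_sqrtr_mul_l2norm ?ler0n // ler_sqr ?nnegrE // (le_trans lhs_ge0 u_le).
Qed.

End LmatRowBound.

Theorem lemma2p1 (R : realType) (n d : nat) (hn : (1 <= n)%N) (hd : (1 <= d)%N)
  (W Wt : 'M[R]_n) (G Gt : 'M[R]_(n * d)) (eps eta C gamma : R) :
  0 <= eps -> 0 <= eta ->
  (forall i j, `|Wt i j - W i j| <= eps) ->
  (forall i j, frob (block Gt i j - block G i j) <= eta) ->
  0 < C ->
  (forall i j, 0 <= W i j <= C) ->
  (forall i j, frob (block G i j) <= C) ->
  (forall i j, frob (block Gt i j) <= C) ->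
  (forall i, gamma < n%:R^-1 * degw W i) ->
  eps < gamma ->
  opnorm (Lmat W G - Lmat Wt Gt)
    <= gamma^-1 * C * (eta + eps) + eps / (gamma * (gamma - eps)) * C ^+ 2.
Proof.
move=> eps_ge0 eta_ge0 Wt_near Gt_near C_gt0 W_bound _ Gt_bound deg_gt eps_lt.
have degW_neq0 i : degw W i != 0 := lt0r_neq0 (deg_gt0 eps_ge0 eps_lt (deg_gt i)).
have degWt_neq0 i : degw Wt i != 0.
  exact: lt0r_neq0 (deg_wt_gt0 eps_ge0 eps_lt (Wt_near i) (deg_gt i)).
apply: le_trans (opnorm_le_frob _ _) _; first by rewrite muln_gt0 hn hd.
apply: frob_le_block_rows => // [|i]; last exact: sum_sqr_frob_block_Lmat_diff_le.
have gap_gt0 : 0 < gamma - eps by rewrite subr_gt0.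
have gamma_gt0 : 0 < gamma := le_lt_trans eps_ge0 eps_lt.
apply: addr_ge0; apply: mulr_ge0; rewrite ?sqr_ge0 ?addr_ge0 //.
  by rewrite mulr_ge0 ?invr_ge0 ?ltW.
by rewrite divr_ge0 // ltW // mulr_gt0.
Qed.
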